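(* Let $X$ be a pre-metric locale. The canonical map $i:X\to\widetilde{X}$ is fiberwise dense, and $\widetilde{X}$ is locally positive.
   Context: Constructive setting (internal to an elementary topos with natural numbers object). Positive open: any cover of it by opens is indexed by an inhabited set; locally positive locale: every open is a union of positive opens. A pre-metric locale is a locally positive locale $X$ with $d:X\times X\to\overleftarrow{\mathbb{R}_+^\infty}$ (upper reals in $[0,\infty]$) symmetric, zero on the diagonal, with the triangle inequality; $\Delta_q=d^*([0,q[)$; $\delta(U)<q$ iff $U\times U\subseteq\Delta_{q'}$ for some $q'<q$; $U\triangleleft V$ iff $\pi_1^*U\wedge\Delta_q\le\pi_2^*V$ for some $q>0$. The completion $\widetilde{X}$ is the locale classifying regular Cauchy filters on $X$ (subsets $\mathcal{F}$ of positive opens, upward closed, downward directed within $\mathcal{F}$, with elements of arbitrarily small diameter, and with each $U\in\mathcal{F}$ having $V\in\mathcal{F}$, $V\triangleleft U$); $U^\sim$ denotes the open ''$U\in\mathcal{F}$'', and $i$ is given by $i^*(U^\sim)=\bigvee_{V\triangleleft U}V$. A map $g:M\to L$ is fiberwise dense if $p^*(U)=g_*g^*p^*(U)$ for every proposition $U$ ($p:L\to 1$). *)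

From Stdlib Require Import QArith List.
Import ListNotations.
Open Scope Q_scope.

(** * Frames (= opens of a locale), presented by their operations.
    Joins are indexed by subsets (predicates) of the carrier; a join of a
    family (I, f) is the join of the image of f. *)
Record FrameOps := {
  fcar  : Type;
  fle   : fcar -> fcar -> Prop;
  ftop  : fcar;
  fmeet : fcar -> fcar -> fcar;
  fjoin : (fcar -> Prop) -> fcar }.

Arguments fle {_} _ _.
Arguments ftop {_}.
Arguments fmeet {_} _ _.
Arguments fjoin {_} _.

Definition feq {F : FrameOps} (a b : fcar F) : Prop := fle a b /\ fle b a.

Definition is_frame (F : FrameOps) : Prop :=
  (forall a : fcar F, fle a a) /\
  (forall a b c : fcar F, fle a b -> fle b c -> fle a c) /\
  (forall a : fcar F, fle a ftop) /\
  (forall a b : fcar F, fle (fmeet a b) a) /\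
  (forall a b : fcar F, fle (fmeet a b) b) /\
  (forall a b c : fcar F, fle c a -> fle c b -> fle c (fmeet a b)) /\
  (forall (S : fcar F -> Prop) a, S a -> fle a (fjoin S)) /\
  (forall (S : fcar F -> Prop) b, (forall a, S a -> fle a b) -> fle (fjoin S) b) /\
  (forall (a : fcar F) (S : fcar F -> Prop),
      fle (fmeet a (fjoin S)) (fjoin (fun c => exists b, S b /\ c = fmeet a b))).

Definition positive {F : FrameOps} (U : fcar F) : Prop :=
  forall S : fcar F -> Prop, fle U (fjoin S) -> exists V, S V.

Definition locally_positive (F : FrameOps) : Prop :=
  forall U : fcar F, feq U (fjoin (fun V => positive V /\ fle V U)).

(** * Binary product of locales: frame coproduct, as C-ideals of A x B.
    Elements are represented by generating sets of pairs; the order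
    compares the generated C-ideals. *)
Definition prod_ideal (A B : FrameOps) (I : fcar A * fcar B -> Prop) : Prop :=
  (forall a b a' b', I (a, b) -> fle a' a -> fle b' b -> I (a', b')) /\
  (forall (S : fcar A -> Prop) b, (forall a, S a -> I (a, b)) -> I (fjoin S, b)) /\
  (forall a (S : fcar B -> Prop), (forall b, S b -> I (a, b)) -> I (a, fjoin S)).

Definition prod_cl (A B : FrameOps) (S : fcar A * fcar B -> Prop)
  (p : fcar A * fcar B) : Prop :=
  forall I, prod_ideal A B I -> (forall q, S q -> I q) -> I p.

Definition prodF (A B : FrameOps) : FrameOps := {|
  fcar  := fcar A * fcar B -> Prop;
  fle   := fun S T => forall p, S p -> prod_cl A B T p;
  ftop  := fun _ => True;
  fmeet := fun S T p => prod_cl A B S p /\ prod_cl A B T p;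
  fjoin := fun F p => exists S, F S /\ S p |}.

(** Projections (inverse image parts). *)
Definition pr1s {A B : FrameOps} (a : fcar A) : fcar (prodF A B) :=
  fun p => p = (a, ftop).
Definition pr2s {A B : FrameOps} (b : fcar B) : fcar (prodF A B) :=
  fun p => p = (ftop, b).
Definition rect {A B : FrameOps} (a : fcar A) (b : fcar B) : fcar (prodF A B) :=
  fun p => p = (a, b).

(** Pairing <f,g> : C -> A x B of locale maps, given by f^*, g^*. *)
Definition pairs {A B C : FrameOps} (f : fcar A -> fcar C) (g : fcar B -> fcar C)
  (S : fcar (prodF A B)) : fcar C :=
  fjoin (fun c => exists a b, S (a, b) /\ c = fmeet (f a) (g b)).

Section Premetric.
Variable X : FrameOps.
Notation X2 := (prodF X X).
Notation X3 := (prodF (prodF X X) X).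

Definition diag_s : fcar X2 -> fcar X := pairs (fun a => a) (fun a => a).
Definition swap_s : fcar X2 -> fcar X2 := pairs (@pr2s X X) (@pr1s X X).

Definition p31 (a : fcar X) : fcar X3 := pr1s (pr1s a).
Definition p32 (a : fcar X) : fcar X3 := pr1s (pr2s a).
Definition p33 (a : fcar X) : fcar X3 := pr2s a.
Definition p12_s : fcar X2 -> fcar X3 := pairs p31 p32.
Definition p23_s : fcar X2 -> fcar X3 := pairs p32 p33.
Definition p13_s : fcar X2 -> fcar X3 := pairs p31 p33.

(** A map d : X x X -> upper reals in [0,oo] is given by
    Delta q = d^*([0,q[), subject to the defining (roundness) relations
    of the frame of upper reals. *)
Definition upper_real_map (D : Q -> fcar X2) : Prop :=
  forall q, feq (D q) (fjoin (fun W => exists q', 0 < q' /\ q' < q /\ W = D q')).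

Definition premetric (D : Q -> fcar X2) : Prop :=
  is_frame X /\ locally_positive X /\ upper_real_map D /\
  (forall q, feq (swap_s (D q)) (D q)) /\
  (forall q, 0 < q -> feq (diag_s (D q)) ftop) /\
  (forall q r, 0 < q -> 0 < r ->
     fle (fmeet (p12_s (D q)) (p23_s (D r))) (p13_s (D (q + r)))).

Variable D : Q -> fcar X2.

Definition diam_lt (U : fcar X) (q : Q) : Prop :=
  exists q', q' < q /\ fle (rect U U : fcar X2) (D q').

Definition wi (U V : fcar X) : Prop :=
  exists q, 0 < q /\ fle (fmeet (pr1s U : fcar X2) (D q)) (pr2s V).

(** * The completion: locale classifying regular Cauchy filters.
    Generators: positive opens (U~ = "U in F").  Its frame is the frame of
    ideals of the free meet-semilattice on the generators (finite lists,
    i.e. finite conjunctions) for the coverage given by the axioms. *)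
Definition G : Type := { U : fcar X | positive U }.
Definition gv (U : G) : fcar X := proj1_sig U.

Definition compl_ideal (I : list G -> Prop) : Prop :=
  (* downward closure: more conjuncts = smaller *)
  (forall s t, I s -> incl s t -> I t) /\
  (* upward closed: U~ |- V~  for U <= V *)
  (forall s U V, fle (gv U) (gv V) -> In U s -> I (V :: s) -> I s) /\
  (* downward directed: U~ /\ V~ |- \/_{W <= U, W <= V} W~ *)
  (forall s U V, In U s -> In V s ->
     (forall W, fle (gv W) (gv U) -> fle (gv W) (gv V) -> I (W :: s)) -> I s) /\
  (* arbitrarily small: T |- \/_{delta(U) < q} U~   (q > 0) *)
  (forall s q, 0 < q -> (forall U, diam_lt (gv U) q -> I (U :: s)) -> I s) /\
  (* regular: U~ |- \/_{V <| U} V~ *)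
  (forall s U, In U s -> (forall V, wi (gv V) (gv U) -> I (V :: s)) -> I s).

Definition compl_cl (S : list G -> Prop) (s : list G) : Prop :=
  forall I, compl_ideal I -> (forall t, S t -> I t) -> I s.

Definition compl : FrameOps := {|
  fcar  := list G -> Prop;
  fle   := fun S T => forall s, S s -> compl_cl T s;
  ftop  := fun _ => True;
  fmeet := fun S T s => compl_cl S s /\ compl_cl T s;
  fjoin := fun F s => exists S, F S /\ S s |}.

Definition tilde (U : G) : fcar compl := fun s => s = [U].

Definition i_gen (U : G) : fcar X := fjoin (fun V => wi V (gv U)).
Definition i_star (S : fcar compl) : fcar X :=
  fjoin (fun W => exists s, S s /\ W = fold_right fmeet ftop (map i_gen s)).

End Premetric.

Definition pstar (L : FrameOps) (P : Prop) : fcar L :=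
  fjoin (fun a => P /\ a = ftop).

Definition lower_star {L M : FrameOps} (gs : fcar L -> fcar M) (b : fcar M) : fcar L :=
  fjoin (fun a => fle (gs a) b).

(** g : M -> L, given by its inverse image gs = g^* . *)
Definition fiberwise_dense (L M : FrameOps) (gs : fcar L -> fcar M) : Prop :=
  forall P : Prop, feq (pstar L P) (lower_star gs (gs (pstar L P))).

(* The frame of the completion is presented by the generators [U~] ([U] a
   positive open) subject to the relations of a regular Cauchy filter, and [i^*]
   respects these relations.  For directedness and regularity one uses that in a
   locally positive locale [x <= b] as soon as every positive open below [x] lies
   below [b]; for smallness one uses the balls [ball Y r], which contain [Y] well
   inside and have diameter at most [3r].
   Both claims then follow from one observation: by directedness and regularity
   every basic open [s] of the completion is covered by basic opens [W :: s] whose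
   image under [i^*] lies above a positive open [V].  Such a [W :: s] is positive,
   since [i^*] turns any cover of it into a cover of [V]; this gives local
   positivity.  And if [i^* s <= i^*(p^* P)], then [V] is covered by the family
   defining [p^* P], which is therefore inhabited, so [P] holds; this gives
   fiberwise density. *)

From Stdlib Require Import QArith Qminmax List Lqa Setoid Morphisms.
From Pilot Require Import Defs.

Existing Class is_frame.
Existing Class locally_positive.

Section Frames.
Context {F : FrameOps} {HF : is_frame F}.
Implicit Types (a b c x : fcar F) (S : fcar F -> Prop).

#[export] Instance fle_preorder : PreOrder (@fle F).
Proof. destruct HF as (Hrefl & Htrans & _); split; [exact Hrefl | exact Htrans]. Qed.

Lemma fle_top a : fle a ftop.
Proof. apply HF. Qed.

Lemma fmeet_le_l a b : fle (fmeet a b) a.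
Proof. apply HF. Qed.

Lemma fmeet_le_r a b : fle (fmeet a b) b.
Proof. apply HF. Qed.

Lemma fmeet_glb a b c : fle c a -> fle c b -> fle c (fmeet a b).
Proof. apply HF. Qed.

Lemma fjoin_ub S a : S a -> fle a (fjoin S).
Proof. apply HF. Qed.

Lemma fjoin_lub S b : (forall a, S a -> fle a b) -> fle (fjoin S) b.
Proof. apply HF. Qed.

Lemma fmeet_fjoin_distr a S :
  fle (fmeet a (fjoin S)) (fjoin (fun c => exists b, S b /\ c = fmeet a b)).
Proof. apply HF. Qed.

Lemma le_fjoin S a c : S a -> fle c a -> fle c (fjoin S).
Proof. intros Ha Hc; rewrite Hc; apply fjoin_ub, Ha. Qed.

Lemma fmeet_mono a a' b b' : fle a a' -> fle b b' -> fle (fmeet a b) (fmeet a' b').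
Proof.
  intros Ha Hb; apply fmeet_glb.
  - rewrite <- Ha; apply fmeet_le_l.
  - rewrite <- Hb; apply fmeet_le_r.
Qed.

#[export] Instance fmeet_fle_proper : Proper (fle ==> fle ==> fle) (@fmeet F).
Proof. intros a a' Ha b b' Hb; exact (fmeet_mono a a' b b' Ha Hb). Qed.

Lemma fmeetC_le a b : fle (fmeet a b) (fmeet b a).
Proof. apply fmeet_glb; [apply fmeet_le_r | apply fmeet_le_l]. Qed.

Lemma fmeetA_le a b c : fle (fmeet a (fmeet b c)) (fmeet (fmeet a b) c).
Proof.
  apply fmeet_glb; [apply fmeet_glb|].
  - apply fmeet_le_l.
  - rewrite fmeet_le_r; apply fmeet_le_l.
  - rewrite fmeet_le_r; apply fmeet_le_r.
Qed.

Lemma fjoin_fmeet_distr S a :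
  fle (fmeet (fjoin S) a) (fjoin (fun c => exists b, S b /\ c = fmeet b a)).
Proof.
  rewrite fmeetC_le, fmeet_fjoin_distr.
  apply fjoin_lub; intros c (b & Hb & ->).
  apply (le_fjoin _ (fmeet b a)); [eauto | apply fmeetC_le].
Qed.

Lemma fle_fjoin_distr x S :
  fle x (fjoin S) -> fle x (fjoin (fun c => exists b, S b /\ c = fmeet x b)).
Proof.
  intros H; rewrite <- fmeet_fjoin_distr.
  apply fmeet_glb; [reflexivity | exact H].
Qed.

Lemma positive_le a b : positive a -> fle a b -> positive b.
Proof. intros Ha Hab S HS; apply Ha; rewrite Hab; exact HS. Qed.

Context {LP : locally_positive F}.

Lemma le_fjoin_positive a : fle a (fjoin (fun P => positive P /\ fle P a)).
Proof. apply LP. Qed.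

Lemma fle_by_positive x b : (forall P, positive P -> fle P x -> fle P b) -> fle x b.
Proof.
  intros H; rewrite le_fjoin_positive.
  apply fjoin_lub; intros P [HP HPx]; auto.
Qed.

Lemma positive_fjoin S : positive (fjoin S) -> exists a, S a /\ positive a.
Proof.
  intros Hp.
  destruct (Hp (fun P => positive P /\ exists a, S a /\ fle P a)) as (P & HP & a & Ha & HPa).
  - apply fjoin_lub; intros a Ha; apply fle_by_positive; intros P HP HPa.
    apply fjoin_ub; eauto.
  - exists a; split; [exact Ha | exact (positive_le _ _ HP HPa)].
Qed.

End Frames.

Section Products.
Context {A B : FrameOps}.
Implicit Types (S T : fcar A * fcar B -> Prop).

Lemma prod_cl_ideal S : prod_ideal A B (prod_cl A B S).
Proof.
  split; [|split].
  - intros a b a' b' H Ha Hb I HI HS. exact (proj1 HI _ _ _ _ (H I HI HS) Ha Hb).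
  - intros S' b H I HI HS. apply (proj1 (proj2 HI)). intros a Ha. exact (H a Ha I HI HS).
  - intros a S' H I HI HS. apply (proj2 (proj2 HI)). intros b Hb. exact (H b Hb I HI HS).
Qed.

Lemma prod_cl_incl S p : S p -> prod_cl A B S p.
Proof. intros H I _ HS; auto. Qed.

Lemma prod_cl_trans S T p :
  (forall q, S q -> prod_cl A B T q) -> prod_cl A B S p -> prod_cl A B T p.
Proof. intros H Hp. apply Hp; [apply prod_cl_ideal | exact H]. Qed.

Lemma prod_cl_le S a b a' b' :
  prod_cl A B S (a, b) -> fle a' a -> fle b' b -> prod_cl A B S (a', b').
Proof. apply prod_cl_ideal. Qed.

Lemma prod_cl_gen S a b a' b' : S (a, b) -> fle a' a -> fle b' b -> prod_cl A B S (a', b').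
Proof. intros H; apply prod_cl_le, prod_cl_incl, H. Qed.

Lemma prod_cl_fjoin_l S (S' : fcar A -> Prop) b :
  (forall a, S' a -> prod_cl A B S (a, b)) -> prod_cl A B S (fjoin S', b).
Proof. apply prod_cl_ideal. Qed.

Lemma prod_cl_fjoin_r S a (S' : fcar B -> Prop) :
  (forall b, S' b -> prod_cl A B S (a, b)) -> prod_cl A B S (a, fjoin S').
Proof. apply prod_cl_ideal. Qed.

Context {HA : is_frame A} {HB : is_frame B}.

Definition meet_gens S T (r : fcar A * fcar B) : Prop :=
  exists x y x' y', S (x, y) /\ T (x', y') /\ r = (fmeet x x', fmeet y y').

Lemma prod_cl_meet_gen S T x y c d :
  S (x, y) -> prod_cl A B T (c, d) -> prod_cl A B (meet_gens S T) (fmeet x c, fmeet y d).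
Proof.
  intros Hxy Hcd.
  set (J := fun r : fcar A * fcar B =>
              prod_cl A B (meet_gens S T) (fmeet x (fst r), fmeet y (snd r))).
  change (J (c, d)). apply Hcd; unfold J; cbn.
  - split; [|split]; cbn.
    + intros a b a' b' H Ha Hb.
      eapply prod_cl_le; [exact H | apply fmeet_mono .. ]; easy.
    + intros S' b H. eapply prod_cl_le; [| apply fmeet_fjoin_distr | reflexivity].
      apply prod_cl_fjoin_l; intros z (a & Ha & ->); exact (H a Ha).
    + intros a S' H. eapply prod_cl_le; [| reflexivity | apply fmeet_fjoin_distr].
      apply prod_cl_fjoin_r; intros z (b & Hb & ->); exact (H b Hb).
  - intros [x' y'] H'. apply prod_cl_incl. exists x, y, x', y'; auto.
Qed.

Lemma prod_cl_meet S T p :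
  prod_cl A B S p -> prod_cl A B T p -> prod_cl A B (meet_gens S T) p.
Proof.
  intros HS HT.
  set (J := fun r : fcar A * fcar B => forall c d, prod_cl A B T (c, d) ->
              prod_cl A B (meet_gens S T) (fmeet (fst r) c, fmeet (snd r) d)).
  assert (HJ : J p).
  { apply HS; unfold J; cbn.
    - split; [|split]; cbn.
      + intros a b a' b' H Ha Hb c d Hcd.
        eapply prod_cl_le; [exact (H c d Hcd) | apply fmeet_mono .. ]; easy.
      + intros S' b H c d Hcd. eapply prod_cl_le; [| apply fjoin_fmeet_distr | reflexivity].
        apply prod_cl_fjoin_l; intros z (a & Ha & ->); exact (H a Ha c d Hcd).
      + intros a S' H c d Hcd. eapply prod_cl_le; [| reflexivity | apply fjoin_fmeet_distr].
        apply prod_cl_fjoin_r; intros z (b & Hb & ->); exact (H b Hb c d Hcd).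
    - intros [x y] Hxy c d Hcd. exact (prod_cl_meet_gen S T x y c d Hxy Hcd). }
  destruct p as [a b].
  eapply prod_cl_le; [exact (HJ a b HT) | apply fmeet_glb .. ]; reflexivity.
Qed.

#[export] Instance prodF_frame : is_frame (prodF A B).
Proof.
  repeat split; cbn.
  - intros S p Hp. apply prod_cl_incl, Hp.
  - intros S T U H1 H2 p Hp. eapply prod_cl_trans; [apply H2 | apply H1, Hp].
  - intros S p _. apply prod_cl_incl; exact I.
  - intros S T p [H _]; exact H.
  - intros S T p [_ H]; exact H.
  - intros S T U H1 H2 p Hp. apply prod_cl_incl; auto.
  - intros F S HS p Hp. apply prod_cl_incl; eauto.
  - intros F T H p (S & HS & Hp). exact (H S HS p Hp).
  - intros S F p [H1 H2].
    eapply prod_cl_trans; [| exact (prod_cl_meet _ _ _ H1 H2)].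
    intros q (x & y & x' & y' & Hxy & (T & HT & HT') & ->). apply prod_cl_incl.
    exists (fun p => prod_cl A B S p /\ prod_cl A B T p). split; [eauto|].
    split; eapply prod_cl_gen; eauto using fmeet_le_l, fmeet_le_r.
Qed.

End Products.

Definition join_preserving {A C : FrameOps} (f : fcar A -> fcar C) : Prop :=
  (forall a b, fle a b -> fle (f a) (f b)) /\
  (forall S, fle (f (fjoin S)) (fjoin (fun c => exists a, S a /\ c = f a))).

Lemma join_preserving_id {A : FrameOps} {HA : is_frame A} : @join_preserving A A (fun a => a).
Proof.
  split; [easy|]. intros S. apply fjoin_lub; intros a Ha. apply fjoin_ub; eauto.
Qed.

Lemma join_preserving_comp {A B C : FrameOps} {HB : is_frame B} {HC : is_frame C}
  (f : fcar A -> fcar B) (g : fcar B -> fcar C) :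
  join_preserving f -> join_preserving g -> join_preserving (fun a => g (f a)).
Proof.
  intros [Hf_mono Hf_join] [Hg_mono Hg_join]. split; [auto|].
  intros S. etransitivity; [apply Hg_mono, Hf_join|]. rewrite Hg_join.
  apply fjoin_lub; intros c (b & (a & Ha & ->) & ->). apply fjoin_ub; eauto.
Qed.

Section Projections.
Context {A B : FrameOps} {HA : is_frame A} {HB : is_frame B}.

Lemma join_preserving_pr1s : join_preserving (@pr1s A B).
Proof.
  split; cbn; unfold pr1s, pr2s; intros.
  - subst p. eapply prod_cl_gen; [reflexivity | assumption | reflexivity].
  - subst p. apply prod_cl_fjoin_l; intros a Ha.
    apply prod_cl_incl. exists (pr1s a); split; [eauto | reflexivity].
Qed.

Lemma join_preserving_pr2s : join_preserving (@pr2s A B).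
Proof.
  split; cbn; unfold pr1s, pr2s; intros.
  - subst p. eapply prod_cl_gen; [reflexivity | reflexivity | assumption].
  - subst p. apply prod_cl_fjoin_r; intros b Hb.
    apply prod_cl_incl. exists (pr2s b); split; [eauto | reflexivity].
Qed.

Lemma pr2s_fmeet (b c : fcar B) :
  fle (fmeet (pr2s b) (pr2s c) : fcar (prodF A B)) (pr2s (fmeet b c)).
Proof.
  intros p [H1 H2]. eapply prod_cl_trans; [| exact (prod_cl_meet _ _ _ H1 H2)].
  intros q (x & y & x' & y' & Hb & Hc & ->). unfold pr2s in Hb, Hc.
  injection Hb as -> ->; injection Hc as -> ->.
  eapply prod_cl_gen; [reflexivity | apply fle_top | reflexivity].
Qed.

Lemma rect_le_pr1s (a : fcar A) (b : fcar B) : fle (rect a b) (pr1s a).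
Proof. intros p ->. eapply prod_cl_gen; [reflexivity | reflexivity | apply fle_top]. Qed.

Lemma rect_le_pr2s (a : fcar A) (b : fcar B) : fle (rect a b) (pr2s b).
Proof. intros p ->. eapply prod_cl_gen; [reflexivity | apply fle_top | reflexivity]. Qed.

Context {LPA : locally_positive A} {LPB : locally_positive B}.

Lemma prod_cl_pr1s_le (a x : fcar A) (y : fcar B) :
  prod_cl A B (pr1s a) (x, y) -> positive y -> fle x a.
Proof.
  intros H.
  set (J := fun r : fcar A * fcar B => positive (snd r) -> fle (fst r) a).
  change (J (x, y)). apply H; unfold J; cbn.
  - split; [|split]; cbn.
    + intros x0 y0 x' y' H1 H2 H3 Hp. rewrite H2. apply H1, (positive_le _ _ Hp H3).
    + intros S y0 H1 Hp. apply fjoin_lub; auto.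
    + intros x0 S H1 Hp. destruct (positive_fjoin S Hp) as (b & Hb & Hpb). eauto.
  - intros q -> _. reflexivity.
Qed.

Lemma prod_cl_pr2s_le (b : fcar B) (x : fcar A) (y : fcar B) :
  prod_cl A B (pr2s b) (x, y) -> positive x -> fle y b.
Proof.
  intros H.
  set (J := fun r : fcar A * fcar B => positive (fst r) -> fle (snd r) b).
  change (J (x, y)). apply H; unfold J; cbn.
  - split; [|split]; cbn.
    + intros x0 y0 x' y' H1 H2 H3 Hp. rewrite H3. apply H1, (positive_le _ _ Hp H2).
    + intros S y0 H1 Hp. destruct (positive_fjoin S Hp) as (c & Hc & Hpc). eauto.
    + intros x0 S H1 Hp. apply fjoin_lub; auto.
  - intros q -> _. reflexivity.
Qed.

End Projections.

Lemma pairs_mono {A B C : FrameOps} {HA : is_frame A} {HB : is_frame B} {HC : is_frame C}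
  (f : fcar A -> fcar C) (g : fcar B -> fcar C) :
  join_preserving f -> join_preserving g ->
  forall S T : fcar (prodF A B), fle S T -> fle (pairs f g S) (pairs f g T).
Proof.
  intros [Hf_mono Hf_join] [Hg_mono Hg_join] S T H.
  apply fjoin_lub; intros c (a & b & Hab & ->).
  set (J := fun r : fcar A * fcar B => fle (fmeet (f (fst r)) (g (snd r))) (pairs f g T)).
  change (J (a, b)). apply (H _ Hab); unfold J; cbn.
  - split; [|split]; cbn.
    + intros x y x' y' H1 H2 H3. rewrite <- H1. apply fmeet_mono; auto.
    + intros S' y H1. rewrite (Hf_join S'), fjoin_fmeet_distr.
      apply fjoin_lub; intros c0 (c1 & (x & Hx & ->) & ->). auto.
    + intros x S' H1. rewrite (Hg_join S'), fmeet_fjoin_distr.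
      apply fjoin_lub; intros c0 (c1 & (y & Hy & ->) & ->). auto.
  - intros [x y] Hxy. apply fjoin_ub; eauto.
Qed.

Section Premetric.
Variables (X : FrameOps) (D : Q -> fcar (prodF X X)).
Hypothesis HP : premetric X D.

#[local] Instance premetric_frame : is_frame X := proj1 HP.
#[local] Instance premetric_locally_positive : locally_positive X := proj1 (proj2 HP).

Local Notation X2 := (prodF X X).
Local Notation X3 := (prodF (prodF X X) X).

Lemma D_mono q1 q2 : q1 <= q2 -> fle (D q1) (D q2).
Proof.
  intros Hq. destruct HP as (_ & _ & UR & _).
  rewrite (proj1 (UR q1)), <- (proj2 (UR q2)).
  apply fjoin_lub; intros W (q' & Hq' & Hlt & ->).
  apply fjoin_ub. exists q'; repeat split; [exact Hq' | exact (Qlt_le_trans _ _ _ Hlt Hq)].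
Qed.

Lemma rect_sym x y q : fle (rect x y) (D q) -> fle (rect y x) (D q).
Proof.
  intros H. destruct HP as (_ & _ & _ & SY & _).
  transitivity (swap_s X (rect x y)).
  - apply (le_fjoin _ (fmeet (pr2s x) (pr1s y))); [exists x, y; split; reflexivity|].
    apply fmeet_glb; [apply rect_le_pr2s | apply rect_le_pr1s].
  - rewrite <- (proj1 (SY q)).
    apply pairs_mono; [apply join_preserving_pr2s | apply join_preserving_pr1s | exact H].
Qed.

Lemma join_preserving_p31 : join_preserving (p31 X).
Proof. apply (join_preserving_comp (@pr1s X X) (@pr1s X2 X)); apply join_preserving_pr1s. Qed.

Lemma join_preserving_p32 : join_preserving (p32 X).
Proof.
  apply (join_preserving_comp (@pr2s X X) (@pr1s X2 X));
    [apply join_preserving_pr2s | apply join_preserving_pr1s].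
Qed.

Lemma join_preserving_p33 : join_preserving (p33 X).
Proof. apply join_preserving_pr2s. Qed.

Lemma rect3_le_p12 a m b : fle (rect (rect a m) b : fcar X3) (p12_s X (rect a m)).
Proof.
  apply (le_fjoin _ (fmeet (p31 X a) (p32 X m))); [exists a, m; split; reflexivity|].
  rewrite rect_le_pr1s. apply fmeet_glb; apply join_preserving_pr1s;
    [apply rect_le_pr1s | apply rect_le_pr2s].
Qed.

Lemma rect3_le_p23 a m b : fle (rect (rect a m) b : fcar X3) (p23_s X (rect m b)).
Proof.
  apply (le_fjoin _ (fmeet (p32 X m) (p33 X b))); [exists m, b; split; reflexivity|].
  apply fmeet_glb; [| apply rect_le_pr2s].
  rewrite rect_le_pr1s. apply join_preserving_pr1s, rect_le_pr2s.
Qed.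

(* Projecting away the middle factor is sound along a positive middle
   coordinate only: [prod_cl_pr1s_le] needs [y] positive. *)
Definition drop_middle (W : fcar X2) (r : fcar X2 * fcar X) : Prop :=
  forall x y, prod_cl X X (fst r) (x, y) -> positive y -> prod_cl X X W (x, snd r).

Lemma drop_middle_ideal W : prod_ideal X2 X (drop_middle W).
Proof.
  unfold drop_middle; split; [|split]; cbn.
  - intros u z u' z' H Hu Hz x y Hxy Hy.
    eapply prod_cl_le; [apply (H x y); auto | reflexivity | exact Hz].
    eapply prod_cl_trans; [exact Hu | exact Hxy].
  - intros F z H x y Hxy.
    set (K := fun r : fcar X * fcar X => positive (snd r) -> prod_cl X X W (fst r, z)).
    change (K (x, y)). apply Hxy; unfold K; cbn.
    + split; [|split]; cbn.
      * intros x0 y0 x' y' G1 G2 G3 Gp.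
        eapply prod_cl_le; [apply G1, (positive_le _ _ Gp G3) | exact G2 | reflexivity].
      * intros S y0 G1 Gp. apply prod_cl_fjoin_l; intros a0 Ha0. auto.
      * intros x0 S G1 Gp. destruct (positive_fjoin S Gp) as (c & Hc & Hpc). eauto.
    + intros [x0 y0] (u & Hu & Hu0) Gp. apply (H u Hu x0 y0); [apply prod_cl_incl|]; auto.
  - intros u S H x y Hxy Hy. apply prod_cl_fjoin_r; intros b0 Hb0. exact (H b0 Hb0 x y Hxy Hy).
Qed.

Lemma p13_drop_middle (W : fcar X2) (a b m : fcar X) :
  positive m -> prod_cl X2 X (p13_s X W) (rect a m, b) -> prod_cl X X W (a, b).
Proof.
  intros Hm H.
  enough (HJ : drop_middle W (rect a m, b)) by exact (HJ a m (prod_cl_incl _ _ eq_refl) Hm).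
  apply H; [apply drop_middle_ideal|].
  intros q (c & (a' & b' & HW & ->) & Hc1 & Hc2).
  apply (prod_cl_meet _ _ _ Hc1 Hc2); [apply drop_middle_ideal|].
  intros r (u & y & u' & y' & G1 & G2 & ->). unfold p31, p33, pr1s, pr2s in G1, G2.
  injection G1 as -> ->; injection G2 as -> ->.
  intros x y Hxy Hy. cbn in Hxy.
  assert (Hx : fle x a').
  { apply (prod_cl_pr1s_le a' x y); [| exact Hy].
    exact (prod_cl_trans _ _ _ (fun q Hq => proj1 Hq) Hxy). }
  eapply prod_cl_gen; [exact HW | exact Hx | apply fmeet_le_r].
Qed.

Lemma rect_triangle a m b s t : 0 < s -> 0 < t -> positive m ->
  fle (rect a m) (D s) -> fle (rect m b) (D t) -> fle (rect a b) (D (s + t)).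
Proof.
  intros Hs Ht Hm Ham Hmb p ->. destruct HP as (_ & _ & _ & _ & _ & TR).
  apply (p13_drop_middle _ a b m Hm), (TR s t Hs Ht). split.
  - eapply prod_cl_trans; [apply (pairs_mono _ _ join_preserving_p31 join_preserving_p32 _ _ Ham)|].
    exact (rect3_le_p12 a m b _ eq_refl).
  - eapply prod_cl_trans; [apply (pairs_mono _ _ join_preserving_p32 join_preserving_p33 _ _ Hmb)|].
    exact (rect3_le_p23 a m b _ eq_refl).
Qed.

Lemma wi_le a b : wi X D a b -> fle a b.
Proof.
  intros (q & Hq & H). destruct HP as (_ & _ & _ & _ & DG & _).
  transitivity (diag_s X (fmeet (pr1s a) (D q))).
  - assert (Ha : fle a (diag_s X (D q))) by (rewrite <- (proj2 (DG q Hq)); apply fle_top).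
    unfold diag_s, pairs in Ha |- *. rewrite (fle_fjoin_distr _ _ Ha).
    apply fjoin_lub; intros c (c' & (x & y & Hxy & ->) & ->).
    apply (le_fjoin _ (fmeet (fmeet a x) y)); [| apply fmeetA_le].
    exists (fmeet a x), y. split; [split | reflexivity].
    + eapply prod_cl_gen; [reflexivity | apply fmeet_le_l | apply fle_top].
    + eapply prod_cl_gen; [exact Hxy | apply fmeet_le_r | reflexivity].
  - transitivity (diag_s X (pr2s b)).
    + apply pairs_mono; [apply join_preserving_id .. | exact H].
    + apply fjoin_lub; intros c (x & y & Hxy & ->).
      unfold pr2s in Hxy; injection Hxy as -> ->. apply fmeet_le_r.
Qed.

Lemma le_wi_trans a' a b : fle a' a -> wi X D a b -> wi X D a' b.
Proof.
  intros Ha (q & Hq & H). exists q; split; [exact Hq|].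
  rewrite <- H. apply fmeet_mono; [apply join_preserving_pr1s, Ha | reflexivity].
Qed.

Lemma wi_le_trans a b b' : wi X D a b -> fle b b' -> wi X D a b'.
Proof.
  intros (q & Hq & H) Hb. exists q; split; [exact Hq|].
  rewrite H. apply join_preserving_pr2s, Hb.
Qed.

Lemma wi_fmeet a b c : wi X D a b -> wi X D a c -> wi X D a (fmeet b c).
Proof.
  intros (q1 & Hq1 & H1) (q2 & Hq2 & H2).
  exists (Qmin q1 q2); split; [apply Q.min_glb_lt; assumption|].
  rewrite <- pr2s_fmeet. apply fmeet_glb.
  - rewrite <- H1. apply fmeet_mono; [reflexivity | apply D_mono, Q.le_min_l].
  - rewrite <- H2. apply fmeet_mono; [reflexivity | apply D_mono, Q.le_min_r].
Qed.

Definition ball (Y : fcar X) (r : Q) : fcar X :=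
  fjoin (fun y => exists x, D r (x, y) /\ positive (fmeet x Y)).

Lemma fmeet_D_le_ball Y r : fle (fmeet (pr1s Y) (D r)) (pr2s (ball Y r)).
Proof.
  intros p [H1 H2]. eapply prod_cl_trans; [| exact (prod_cl_meet _ _ _ H1 H2)].
  intros q (x & y & x' & y' & G1 & G2 & ->). unfold pr1s in G1; injection G1 as -> ->.
  eapply prod_cl_le; [| apply le_fjoin_positive | reflexivity].
  apply prod_cl_fjoin_l; intros P (HP' & HPle).
  eapply prod_cl_gen; [reflexivity | apply fle_top|].
  rewrite fmeet_le_r. apply fjoin_ub. exists x'. split; [exact G2|].
  apply (positive_le _ _ HP'). rewrite HPle. apply fmeetC_le.
Qed.

Lemma le_ball Y r : 0 < r -> fle Y (ball Y r).
Proof. intros Hr. apply wi_le. exists r. split; [exact Hr | apply fmeet_D_le_ball]. Qed.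

Lemma ball_fmeet_D_le P U r : 0 < r ->
  fle (fmeet (pr1s P) (D (r + r))) (pr2s U) -> fle (fmeet (pr1s (ball P r)) (D r)) (pr2s U).
Proof.
  intros Hr HU p [H1 H2]. eapply prod_cl_trans; [| exact (prod_cl_meet _ _ _ H1 H2)].
  intros z (x0 & y0 & a & b & G1 & G2 & ->). unfold pr1s in G1; injection G1 as -> ->.
  eapply prod_cl_le; [| apply fjoin_fmeet_distr | reflexivity].
  apply prod_cl_fjoin_l; intros z (y & (x & Hxy & Hpx) & ->).
  eapply prod_cl_le; [| apply le_fjoin_positive | reflexivity].
  apply prod_cl_fjoin_l; intros Q (HQ & HQle).
  eapply prod_cl_gen; [reflexivity | apply fle_top|]. rewrite fmeet_le_r.
  apply (prod_cl_pr2s_le U (fmeet x P) b); [| exact Hpx].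
  assert (Hdist : fle (rect (fmeet x P) b) (D (r + r))).
  { apply (rect_triangle _ Q _ _ _ Hr Hr HQ); intros p0 ->.
    - eapply prod_cl_gen; [exact Hxy | apply fmeet_le_l | rewrite HQle; apply fmeet_le_l].
    - eapply prod_cl_gen; [exact G2 | rewrite HQle; apply fmeet_le_r | reflexivity]. }
  apply HU. split.
  - eapply prod_cl_gen; [reflexivity | apply fmeet_le_r | apply fle_top].
  - exact (Hdist _ eq_refl).
Qed.

Lemma rect_ball_le Y r : 0 < r -> fle (rect Y Y) (D r) ->
  fle (rect (ball Y r) (ball Y r)) (D (r + r + r)).
Proof.
  intros Hr HY p ->. unfold ball.
  apply prod_cl_fjoin_l; intros y1 (x1 & G1 & Hp1).
  apply prod_cl_fjoin_r; intros y2 (x2 & G2 & Hp2).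
  refine (rect_triangle y1 (fmeet x2 Y) y2 (r + r) r _ Hr Hp2 _ _ _ eq_refl); [lra | |].
  - apply (rect_triangle y1 (fmeet x1 Y) _ r r Hr Hr Hp1).
    + apply rect_sym. intros p0 ->. eapply prod_cl_gen; [exact G1 | apply fmeet_le_l | reflexivity].
    + intros p0 ->. eapply prod_cl_le; [apply HY; reflexivity | apply fmeet_le_r ..].
  - intros p0 ->. eapply prod_cl_gen; [exact G2 | apply fmeet_le_l | reflexivity].
Qed.

Local Notation G := (Defs.G X).
Local Notation gv := (Defs.gv X).
Local Notation wi := (Defs.wi X D).
Local Notation i_gen := (Defs.i_gen X D).
Local Notation compl := (Defs.compl X D).

Definition i_list (t : list G) : fcar X := fold_right fmeet ftop (map i_gen t).

Lemma wi_le_i_gen Y (U : G) : wi Y (gv U) -> fle Y (i_gen U).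
Proof. intros H. apply fjoin_ub, H. Qed.

Lemma i_gen_mono (U V : G) : fle (gv U) (gv V) -> fle (i_gen U) (i_gen V).
Proof.
  intros H. apply fjoin_lub; intros Y HY. apply wi_le_i_gen, (wi_le_trans _ _ _ HY H).
Qed.

Lemma i_gen_fmeet_cover (U V : G) :
  fle (fmeet (i_gen U) (i_gen V))
      (fjoin (fun c => exists W : G, (fle (gv W) (gv U) /\ fle (gv W) (gv V)) /\ c = i_gen W)).
Proof.
  unfold i_gen at 1. rewrite fjoin_fmeet_distr.
  apply fjoin_lub; intros c (Y & HY & ->).
  unfold i_gen. rewrite fmeet_fjoin_distr.
  apply fjoin_lub; intros c (Y' & HY' & ->).
  apply fle_by_positive; intros P HPpos HPle.
  assert (HPUV : wi P (fmeet (gv U) (gv V))).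
  { apply wi_fmeet; [apply (le_wi_trans _ Y) | apply (le_wi_trans _ Y')]; auto;
      rewrite HPle; [apply fmeet_le_l | apply fmeet_le_r]. }
  set (W := exist _ (fmeet (gv U) (gv V)) (positive_le _ _ HPpos (wi_le _ _ HPUV)) : G).
  apply (le_fjoin _ (i_gen W)).
  - exists W. split; [split; [apply fmeet_le_l | apply fmeet_le_r] | reflexivity].
  - apply wi_le_i_gen, HPUV.
Qed.

Lemma top_small_cover q : 0 < q ->
  fle ftop (fjoin (fun c => exists U : G, diam_lt X D (gv U) q /\ c = i_gen U)).
Proof.
  intros Hq. destruct HP as (_ & _ & _ & _ & DG & _).
  set (r := q * (1 # 4)). assert (Hr : 0 < r) by (unfold r; lra).
  rewrite (proj2 (DG r Hr)).
  apply fjoin_lub; intros c (x & y & Hxy & ->).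
  apply fle_by_positive; intros Y HY HYle.
  set (U := exist _ (ball Y r) (positive_le _ _ HY (le_ball Y r Hr)) : G).
  apply (le_fjoin _ (i_gen U)).
  - exists U. split; [| reflexivity].
    exists (r + r + r). split; [unfold r; lra|].
    apply rect_ball_le; [exact Hr|]. intros p ->.
    eapply prod_cl_gen; [exact Hxy | ..]; rewrite HYle; [apply fmeet_le_l | apply fmeet_le_r].
  - apply wi_le_i_gen. exists r. split; [exact Hr | apply fmeet_D_le_ball].
Qed.

Lemma i_gen_regular_cover (U : G) :
  fle (i_gen U) (fjoin (fun c => exists V : G, wi (gv V) (gv U) /\ c = i_gen V)).
Proof.
  apply fjoin_lub; intros Y HY.
  apply fle_by_positive; intros P HPpos HPle.
  destruct (le_wi_trans _ _ _ HPle HY) as (q & Hq & HPq).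
  set (r := q * (1 # 2)). assert (Hr : 0 < r) by (unfold r; lra).
  set (V := exist _ (ball P r) (positive_le _ _ HPpos (le_ball P r Hr)) : G).
  apply (le_fjoin _ (i_gen V)).
  - exists V. split; [| reflexivity]. exists r. split; [exact Hr|].
    apply ball_fmeet_D_le; [exact Hr|]. rewrite <- HPq.
    apply fmeet_mono; [reflexivity | apply D_mono; unfold r; lra].
  - apply wi_le_i_gen. exists r. split; [exact Hr | apply fmeet_D_le_ball].
Qed.

Lemma i_list_le_i_gen U t : In U t -> fle (i_list t) (i_gen U).
Proof.
  induction t as [|V t IH]; intros HU; [destruct HU|]; cbn.
  destruct HU as [-> | HU]; [apply fmeet_le_l|].
  rewrite fmeet_le_r. apply IH, HU.
Qed.

Lemma le_i_list x t : (forall U, In U t -> fle x (i_gen U)) -> fle x (i_list t).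
Proof.
  induction t as [|V t IH]; intros H; cbn; [apply fle_top|].
  apply fmeet_glb; [apply H; left; reflexivity | apply IH; intros U HU; apply H; right; exact HU].
Qed.

Lemma i_list_incl s t : incl s t -> fle (i_list t) (i_list s).
Proof. intros H. apply le_i_list; intros U HU. apply i_list_le_i_gen, H, HU. Qed.

Lemma i_list_le_of_cover s B (C : G -> Prop) :
  fle (i_list s) (fjoin (fun c => exists W, C W /\ c = i_gen W)) ->
  (forall W, C W -> fle (i_list (W :: s)) B) -> fle (i_list s) B.
Proof.
  intros Hcover HB. rewrite (fle_fjoin_distr _ _ Hcover).
  apply fjoin_lub; intros c (b & (W & HW & ->) & ->).
  rewrite fmeetC_le. apply HB, HW.
Qed.

(* The relations of the completion hold after [i^*]: this is what makes [i] a map. *)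
Lemma i_list_le_ideal B : compl_ideal X D (fun t => fle (i_list t) B).
Proof.
  split; [|split; [|split; [|split]]].
  - intros s t Hs Hst. rewrite (i_list_incl _ _ Hst). exact Hs.
  - intros s U V HUV HU H. rewrite <- H. apply fmeet_glb; [| reflexivity].
    rewrite (i_list_le_i_gen _ _ HU). apply i_gen_mono, HUV.
  - intros s U V HU HV H.
    apply (i_list_le_of_cover s B (fun W => fle (gv W) (gv U) /\ fle (gv W) (gv V)));
      [| intros W []; apply H; assumption].
    rewrite <- i_gen_fmeet_cover. apply fmeet_glb; apply i_list_le_i_gen; assumption.
  - intros s q Hq H. apply (i_list_le_of_cover s B (fun U => diam_lt X D (gv U) q)); [| exact H].
    rewrite <- (top_small_cover q Hq). apply fle_top.
  - intros s U HU H. apply (i_list_le_of_cover s B (fun V => wi (gv V) (gv U))); [| exact H].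
    rewrite (i_list_le_i_gen _ _ HU). apply i_gen_regular_cover.
Qed.

Lemma compl_cl_i_list_le (T : fcar compl) s : compl_cl X D T s -> fle (i_list s) (i_star X D T).
Proof.
  intros H. apply (H _ (i_list_le_ideal _)). intros t Ht. apply fjoin_ub. exists t; auto.
Qed.

Lemma i_star_inhabited Y (T : fcar compl) : positive Y -> fle Y (i_star X D T) -> exists s, T s.
Proof. intros HY HYT. destruct (HY _ HYT) as (c & s & Hs & _). exists s; exact Hs. Qed.

Lemma compl_ideal_lower_bound (J : list G -> Prop) : compl_ideal X D J ->
  forall t s, incl t s -> (forall W, (forall U, In U t -> fle (gv W) (gv U)) -> J (W :: s)) -> J s.
Proof.
  intros (Hdown & _ & Hdir & Hsmall & _).
  induction t as [|U t IH]; intros s Hts H.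
  - apply (Hsmall s 1); [reflexivity|]. intros U _. apply H. intros U' [].
  - apply IH; [intros x Hx; apply Hts; right; exact Hx|]. intros W HW.
    apply (Hdir (W :: s) U W); [right; apply Hts; left; reflexivity | left; reflexivity|].
    intros W' HW'U HW'W. apply (Hdown (W' :: s)).
    + apply H. intros U' [-> | HU']; [exact HW'U | rewrite HW'W; apply HW, HU'].
    + intros x [-> | Hx]; [left | right; right]; auto.
Qed.

Lemma compl_ideal_refine (J : list G -> Prop) s : compl_ideal X D J ->
  (forall W V : G, fle (gv V) (i_list (W :: s)) -> J (W :: s)) -> J s.
Proof.
  intros HJ H. apply (compl_ideal_lower_bound J HJ s s (incl_refl s)). intros W HW.
  destruct HJ as (Hdown & _ & _ & _ & Hreg).
  apply (Hreg (W :: s) W); [left; reflexivity|]. intros V HV.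
  apply (Hdown (W :: s)); [| apply incl_tl, incl_refl].
  apply (H W V), le_i_list. intros U [<- | HU]; apply wi_le_i_gen; [exact HV|].
  apply (wi_le_trans _ _ _ HV), HW, HU.
Qed.

Lemma i_fiberwise_dense : fiberwise_dense compl X (i_star X D).
Proof.
  intros P. split.
  - intros s Hs J _ HT. apply HT. exists (pstar compl P). split; [reflexivity | exact Hs].
  - intros s (S & HS & Hs) J HJ HT. apply (compl_ideal_refine J s HJ). intros W V HV.
    assert (HPtrue : P).
    { destruct (i_star_inhabited (gv V) (pstar compl P)) as (t & T & (HPtrue & _) & _);
        [apply (proj2_sig V) | | exact HPtrue].
      rewrite HV, (i_list_incl s (W :: s)), <- HS; [| apply incl_tl, incl_refl].
      apply fjoin_ub. exists s; auto. }
    apply HT. exists (@ftop compl). split; [split; auto | exact Logic.I].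
Qed.

Lemma compl_locally_positive : locally_positive compl.
Proof.
  intros U. split.
  - intros s Hs J HJ HT. apply (compl_ideal_refine J s HJ). intros W V HV.
    apply HT. exists (fun t => t = W :: s). split; [split | reflexivity].
    + intros S HS.
      destruct (i_star_inhabited (gv V) (fjoin S)) as (t & T & HT' & _);
        [apply (proj2_sig V) | rewrite HV; exact (compl_cl_i_list_le _ _ (HS _ eq_refl)) | eauto].
    + intros t -> J' HJ' HU. apply (proj1 HJ' s); [apply HU, Hs | apply incl_tl, incl_refl].
  - intros s (S & (_ & HSU) & Hs). apply HSU, Hs.
Qed.

End Premetric.

Theorem mainTheorem16 (X : FrameOps) (D : Q -> fcar (prodF X X)) :
  premetric X D ->
  fiberwise_dense (compl X D) X (i_star X D) /\ locally_positive (compl X D).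
Proof.
  intros HP. split; [apply i_fiberwise_dense | apply compl_locally_positive]; exact HP.
Qed.
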